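(* Let $\mathcal L$ be either FO or MSO, let $k\ge 0$, let $\sigma,\sigma'$ be disjoint vocabularies, $\mathfrak C$ a class of finite $\sigma'$-structures and $\mathcal D$ a class of finite $\sigma$-structures. Let $\mathcal A\in\mathcal D$ and $\mathcal B\in\mathfrak C$ with $\mathrm{dom}(\mathcal A)=\mathrm{dom}(\mathcal B)$, and let $\psi_{(\mathcal A,\mathcal B)}$ be the disjunction of the sentences $\mathrm{tp}^k_{\mathcal L}(\mathcal A',\mathcal B')$ over all $\mathcal A'\in\mathcal D$, $\mathcal B'\in\mathfrak C$ with $\mathrm{dom}(\mathcal A')=\mathrm{dom}(\mathcal B')$ such that $(\mathcal A',\mathcal B')$ is a $k$-flip of $(\mathcal A,\mathcal B)$ under $(\mathcal L,\mathcal D,\mathfrak C)$. Then: (1) for every $\mathcal A'\in\mathcal D$ and $\mathcal B'\in\mathfrak C$ with $\mathrm{dom}(\mathcal A')=\mathrm{dom}(\mathcal B')$, $(\mathcal A',\mathcal B')\models\psi_{(\mathcal A,\mathcal B)}$ if and only if $(\mathcal A',\mathcal B')$ is a $k$-flip of $(\mathcal A,\mathcal B)$ under $(\mathcal L,\mathcal D,\mathfrak C)$; (2) $\psi_{(\mathcal A,\mathcal B)}$ is an $\mathcal L$-sentence of quantifier rank at most $k$ that is $\mathfrak C$-invariant over $\mathcal D$; (3) for every $\mathcal A'\in\mathcal D$, $\mathrm{tp}^k_{\mathrm{inv}(\mathcal L+\{\mathfrak C\})^{\mathcal D}}(\mathcal A)=\mathrm{tp}^k_{\mathrm{inv}(\mathcal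 L+\{\mathfrak C\})^{\mathcal D}}(\mathcal A')$ if and only if $\mathcal A'\in Q_{\psi_{(\mathcal A,\mathcal B)}}$.
   Context: All structures are finite; vocabularies consist of relation and constant symbols. For a $\sigma$-structure $\mathcal A$ and a $\sigma'$-structure $\mathcal B$ with the same domain, $(\mathcal A,\mathcal B)$ denotes the $(\sigma\cup\sigma')$-structure on that domain interpreting $\sigma$ as in $\mathcal A$ and $\sigma'$ as in $\mathcal B$. $\mathrm{tp}^k_{\mathcal L}(\mathcal M)$ is the set of $\mathcal L$-sentences of quantifier rank at most $k$ true in $\mathcal M$; up to logical equivalence it is finite and is identified with the single sentence given by the conjunction of its members (so there are finitely many such types and the disjunction above is finite up to equivalence). An $\mathcal L$-sentence $\varphi$ over $\sigma\cup\sigma'$ is $\mathfrak C$-invariant over $\mathcal D$ if for every $\mathcal A\in\mathcal D$ and all $\mathcal B_1,\mathcal B_2\in\mathfrak C$ with domain $\mathrm{dom}(\mathcal A)$, $(\mathcal A,\mathcal B_1)\models\varphi$ iff $(\mathcal A,\mathcal B_2)\models\varphi$; such $\varphi$ defines $Q_\varphi=\{\mathcal A\in\mathcal D : (\mathcal A,\mathcal B)\models\varphi$ for some (equivalently all) $\mathcal B\in\mathfrak C$ with $\mathrm{dom}(\mathcal B)=\mathrm{dom}(\mathcal A)\}$. The type $\mathrm{tp}^k_{\mathrm{inv}(\mathcal L+\{\mathfrak C\})^{\mathcal D}}(\mathcal A)$ is the set of all $\mathfrak C$-invariant over $\mathcal D$ $\mathcal L$-sentences $\varphi$ of quantifier rank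 at most $k$ with $\mathcal A\in Q_\varphi$. For pairs $(\mathcal A,\mathcal B),(\mathcal A',\mathcal B')$ with $\mathcal A,\mathcal A'\in\mathcal D$, $\mathcal B,\mathcal B'\in\mathfrak C$ and shared domains, $(\mathcal A,\mathcal B)\sim_k(\mathcal A',\mathcal B')$ means $\mathcal A=\mathcal A'$ or $\mathrm{tp}^k_{\mathcal L}(\mathcal A,\mathcal B)=\mathrm{tp}^k_{\mathcal L}(\mathcal A',\mathcal B')$; a $k$-flip of $(\mathcal A,\mathcal B)$ under $(\mathcal L,\mathcal D,\mathfrak C)$ is any pair reachable from $(\mathcal A,\mathcal B)$ by a finite sequence of $\sim_k$ steps. *)

From mathcomp Require Import all_boot.

Set Implicit Arguments.
Unset Strict Implicit.
Unset Printing Implicit Defensive.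

Record vocab := Vocab {
  rsym : finType;
  arity : rsym -> nat;
  csym : finType }.

Record interp (V : vocab) (T : finType) := Interp {
  rel_of : forall r : rsym V, (arity r).-tuple T -> bool;
  const_of : csym V -> T }.

Arguments rel_of {V T} i r _.
Arguments const_of {V T} i c.

Definition sum_arity (V W : vocab) (r : (rsym V + rsym W)%type) : nat :=
  match r with inl r => arity r | inr r => arity r end.

Definition vsum (V W : vocab) : vocab :=
  @Vocab (rsym V + rsym W)%type (@sum_arity V W) (csym V + csym W)%type.

Definition pairI (V W : vocab) (T : finType) (A : interp V T) (B : interp W T)
  : interp (vsum V W) T :=
  @Interp (vsum V W) T
    (fun r => match r as r0 return (sum_arity r0).-tuple T -> bool with
              | inl r => rel_of A r | inr r => rel_of B r end)
    (fun c => match c with inl c => const_of A c | inr c => const_of B c end).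

Inductive term (V : vocab) :=
| tvar of nat
| tconst of csym V.

Inductive formula (V : vocab) :=
| Ffalse
| Feq of term V & term V
| Frel (r : rsym V) of (arity r).-tuple (term V)
| Fmem of nat & term V
| Fneg of formula V
| Fand of formula V & formula V
| For of formula V & formula V
| Fex of nat & formula V
| Fall of nat & formula V
| FexS of nat & formula V
| FallS of nat & formula V.

Arguments Ffalse {V}.

Fixpoint qr (V : vocab) (f : formula V) : nat :=
  match f with
  | Ffalse | Feq _ _ | Frel _ _ | Fmem _ _ => 0
  | Fneg g => qr g
  | Fand g h | For g h => maxn (qr g) (qr h)
  | Fex _ g | Fall _ g | FexS _ g | FallS _ g => (qr g).+1
  end.

Definition tvars (V : vocab) (t : term V) : seq nat :=
  match t with tvar i => [:: i] | tconst _ => [::] end.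

Fixpoint fv (V : vocab) (f : formula V) : seq nat :=
  match f with
  | Ffalse => [::]
  | Feq t u => tvars t ++ tvars u
  | Frel _ ts => flatten (map (@tvars V) ts)
  | Fmem _ t => tvars t
  | Fneg g => fv g
  | Fand g h | For g h => fv g ++ fv h
  | Fex i g | Fall i g => filter (fun j => j != i) (fv g)
  | FexS _ g | FallS _ g => fv g
  end.

Fixpoint fsv (V : vocab) (f : formula V) : seq nat :=
  match f with
  | Ffalse | Feq _ _ | Frel _ _ => [::]
  | Fmem i _ => [:: i]
  | Fneg g => fsv g
  | Fand g h | For g h => fsv g ++ fsv h
  | Fex _ g | Fall _ g => fsv g
  | FexS i g | FallS i g => filter (fun j => j != i) (fsv g)
  end.

Definition is_sentence (V : vocab) (f : formula V) : Prop :=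
  fv f = [::] /\ fsv f = [::].

Inductive logic := FO | MSO.

Fixpoint is_FO (V : vocab) (f : formula V) : bool :=
  match f with
  | Ffalse | Feq _ _ | Frel _ _ => true
  | Fmem _ _ => false
  | Fneg g => is_FO g
  | Fand g h | For g h => is_FO g && is_FO h
  | Fex _ g | Fall _ g => is_FO g
  | FexS _ _ | FallS _ _ => false
  end.

Definition in_logic (L : logic) (V : vocab) (f : formula V) : bool :=
  match L with FO => is_FO f | MSO => true end.

Definition L_sentence (L : logic) (V : vocab) (f : formula V) : Prop :=
  in_logic L f /\ is_sentence f.

(* partial assignment of first-order variables (so that empty domains are
   handled correctly); total assignment of set variables *)
Definition tval (V : vocab) (T : finType) (M : interp V T)
  (e : nat -> option T) (t : term V) : option T :=
  match t with tvar i => e i | tconst c => Some (const_of M c) end.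

Fixpoint sat (V : vocab) (T : finType) (M : interp V T)
  (e : nat -> option T) (s : nat -> {set T}) (f : formula V) : Prop :=
  match f with
  | Ffalse => False
  | Feq t u => exists x, tval M e t = Some x /\ tval M e u = Some x
  | Frel r ts => exists xs : (arity r).-tuple T,
       (forall i, tval M e (tnth ts i) = Some (tnth xs i)) /\ rel_of M r xs
  | Fmem i t => exists x, tval M e t = Some x /\ x \in s i
  | Fneg g => ~ sat M e s g
  | Fand g h => sat M e s g /\ sat M e s h
  | For g h => sat M e s g \/ sat M e s h
  | Fex i g => exists x : T,
       sat M (fun j => if j == i then Some x else e j) s g
  | Fall i g => forall x : T,
       sat M (fun j => if j == i then Some x else e j) s g
  | FexS i g => exists X : {set T},
       sat M e (fun j => if j == i then X else s j) g
  | FallS i g => forall X : {set T},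
       sat M e (fun j => if j == i then X else s j) g
  end.

Definition holds (V : vocab) (T : finType) (M : interp V T) (f : formula V)
  : Prop := sat M (fun _ => None) (fun _ => set0) f.

Definition in_tp (L : logic) (k : nat) (V : vocab) (T : finType)
  (M : interp V T) (f : formula V) : Prop :=
  L_sentence L f /\ qr f <= k /\ holds M f.

Definition same_tp (L : logic) (k : nat) (V : vocab) (T T' : finType)
  (M : interp V T) (M' : interp V T') : Prop :=
  forall f, in_tp L k M f <-> in_tp L k M' f.

(* N satisfies the sentence tp^k_L(M) (the conjunction of its members) *)
Definition sat_tp (L : logic) (k : nat) (V : vocab) (T T' : finType)
  (M : interp V T) (N : interp V T') : Prop :=
  forall f, in_tp L k M f -> holds N f.

Definition sclass (V : vocab) := forall T : finType, interp V T -> Prop.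

Section Inv.
Variables (s s' : vocab) (D : sclass s) (C : sclass s').

Definition C_invariant (f : formula (vsum s s')) : Prop :=
  forall (T : finType) (A : interp s T), D A ->
  forall B1 B2 : interp s' T, C B1 -> C B2 ->
    (holds (pairI A B1) f <-> holds (pairI A B2) f).

Definition inQ (f : formula (vsum s s')) (T : finType) (A : interp s T)
  : Prop := D A /\ exists B : interp s' T, C B /\ holds (pairI A B) f.

Definition in_tpinv (L : logic) (k : nat) (T : finType) (A : interp s T)
  (f : formula (vsum s s')) : Prop :=
  L_sentence L f /\ qr f <= k /\ C_invariant f /\ inQ f A.

Definition same_tpinv (L : logic) (k : nat) (T T' : finType)
  (A : interp s T) (A' : interp s T') : Prop :=
  forall f, in_tpinv L k A f <-> in_tpinv L k A' f.

Record spair := SPair { pdom : finType; pfst : interp s pdom;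
                        psnd : interp s' pdom }.

Definition ksim (L : logic) (k : nat) (p q : spair) : Prop :=
  D (pfst p) /\ C (psnd p) /\ D (pfst q) /\ C (psnd q) /\
  (existT (fun T : finType => interp s T) (pdom p) (pfst p) =
   existT (fun T : finType => interp s T) (pdom q) (pfst q)
   \/ same_tp L k (pairI (pfst p) (psnd p)) (pairI (pfst q) (psnd q))).

Inductive kflip_of (L : logic) (k : nat) (p : spair) : spair -> Prop :=
| kflip_refl : kflip_of L k p p
| kflip_step q r : kflip_of L k p q -> ksim L k q r -> kflip_of L k p r.

Definition kflip (L : logic) (k : nat) (T : finType) (A : interp s T)
  (B : interp s' T) (T' : finType) (A' : interp s T') (B' : interp s' T')
  : Prop := kflip_of L k (SPair A B) (SPair A' B').

(* psi is (up to logical equivalence) the disjunction of the sentences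
   tp^k_L(A',B') over all k-flips (A',B') of (A,B) with A' \in D, B' \in C:
   an L-sentence of quantifier rank <= k satisfied by exactly the
   (sigma u sigma')-structures satisfying one of these type-sentences. *)
Definition flip_disj (L : logic) (k : nat) (T : finType) (A : interp s T)
  (B : interp s' T) (psi : formula (vsum s s')) : Prop :=
  L_sentence L psi /\ qr psi <= k /\
  forall (T'' : finType) (M : interp (vsum s s') T''),
    holds M psi <->
    exists (T' : finType) (A' : interp s T') (B' : interp s' T'),
      D A' /\ C B' /\ kflip L k A B A' B' /\ sat_tp L k (pairI A' B') M.

End Inv.

(* The formulas of L of quantifier rank at most k with free variables among a
   fixed finite set form only finitely many classes up to logical equivalence:
   every such formula is a Boolean combination of atoms and of existential
   formulas, and after renaming the bound variable to a fixed fresh one the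
   latter are finitely many by induction on k.  Hence the sentence
   tp^k_L(A',B') depends only on the truth vector of (A',B') on a finite set of
   representatives, and psi is the DNF over the truth vectors of the k-flips.
   Then (A',B') satisfies psi iff it has the k-type of some k-flip, i.e. iff it
   is itself a k-flip; changing only the sigma'-part is a ~_k step, whence
   C-invariance; and ~_k steps preserve the invariant k-type of the
   sigma-part, whence (3). *)

From mathcomp Require Import boolp.
From mathcomp Require Import all_boot.

Set Implicit Arguments.
Unset Strict Implicit.
Unset Printing Implicit Defensive.

Definition rename_term V (p : nat -> nat) (t : term V) : term V :=
  if t is tvar i then tvar V (p i) else t.

Fixpoint rename V (p q : nat -> nat) (f : formula V) : formula V :=
  match f with
  | Ffalse => Ffalse
  | Feq t u => Feq (rename_term p t) (rename_term p u)
  | Frel r ts => Frel (map_tuple (rename_term p) ts)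
  | Fmem i t => Fmem (q i) (rename_term p t)
  | Fneg g => Fneg (rename p q g)
  | Fand g h => Fand (rename p q g) (rename p q h)
  | For g h => For (rename p q g) (rename p q h)
  | Fex i g => Fex (p i) (rename p q g)
  | Fall i g => Fall (p i) (rename p q g)
  | FexS i g => FexS (q i) (rename p q g)
  | FallS i g => FallS (q i) (rename p q g)
  end.

Lemma comp_update (A : Type) (e : nat -> A) (p : nat -> nat) i a : injective p ->
  (fun j => if j == p i then a else e j) \o p =
  (fun j => if j == i then a else (e \o p) j).
Proof. by move=> inj_p; apply: funext => j /=; rewrite (inj_eq inj_p). Qed.

Section Rename.
Variables (V : vocab) (p q : nat -> nat).

Lemma tval_rename_term T (M : interp V T) e t :
  tval M e (rename_term p t) = tval M (e \o p) t.
Proof. by case: t. Qed.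

Hypotheses (inj_p : injective p) (inj_q : injective q).

Lemma sat_rename T (M : interp V T) (f : formula V) e s :
  sat M e s (rename p q f) <-> sat M (e \o p) (s \o q) f.
Proof.
elim: f e s => [|t u|r ts|i t|g IH|g IHg h IHh|g IHg h IHh|i g IH|i g IH|i g IH|i g IH]
  e s /=; rewrite ?tval_rename_term //.
- have E j : tnth (map_tuple (rename_term p) ts) j = rename_term p (tnth ts j).
    exact: tnth_map.
  by split=> -[xs [Hxs Hr]]; exists xs; split=> // j;
    move: (Hxs j); rewrite E tval_rename_term.
- by rewrite IH.
- by rewrite IHg IHh.
- by rewrite IHg IHh.
- have H x : sat M (fun j => if j == p i then Some x else e j) s (rename p q g) <->
      sat M (fun j => if j == i then Some x else (e \o p) j) (s \o q) g.
    by rewrite IH comp_update.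
  by split=> -[x /H Hx]; exists x.
- have H x : sat M (fun j => if j == p i then Some x else e j) s (rename p q g) <->
      sat M (fun j => if j == i then Some x else (e \o p) j) (s \o q) g.
    by rewrite IH comp_update.
  by split=> Hx x; apply/H.
- have H X : sat M e (fun j => if j == q i then X else s j) (rename p q g) <->
      sat M (e \o p) (fun j => if j == i then X else (s \o q) j) g.
    by rewrite IH comp_update.
  by split=> -[X /H HX]; exists X.
- have H X : sat M e (fun j => if j == q i then X else s j) (rename p q g) <->
      sat M (e \o p) (fun j => if j == i then X else (s \o q) j) g.
    by rewrite IH comp_update.
  by split=> HX X; apply/H.
Qed.

Lemma qr_rename (f : formula V) : qr (rename p q f) = qr f.
Proof.
by elim: f => [|||| g IH|g IHg h IHh|g IHg h IHh|i g IH|i g IH|i g IH|i g IH] //=;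
  rewrite ?IH ?IHg ?IHh.
Qed.

Lemma is_FO_rename (f : formula V) : is_FO (rename p q f) = is_FO f.
Proof.
by elim: f => [|||| g IH|g IHg h IHh|g IHg h IHh|i g IH|i g IH|i g IH|i g IH] //=;
  rewrite ?IH ?IHg ?IHh.
Qed.

Lemma fv_rename (f : formula V) : fv (rename p q f) = map p (fv f).
Proof.
have tvarsE t : tvars (rename_term p t) = map p (tvars t) by case: t.
elim: f => [|t u|r ts|i t|g IH|g IHg h IHh|g IHg h IHh|i g IH|i g IH|i g IH|i g IH] //=;
  rewrite ?IH ?IHg ?IHh ?map_cat ?tvarsE //.
- by elim: (val ts) => //= t l ->; rewrite map_cat tvarsE.
- by rewrite filter_map; congr map; apply: eq_filter => j /=; rewrite inj_eq.
- by rewrite filter_map; congr map; apply: eq_filter => j /=; rewrite inj_eq.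
Qed.

Lemma fsv_rename (f : formula V) : fsv (rename p q f) = map q (fsv f).
Proof.
elim: f => [|||| g IH|g IHg h IHh|g IHg h IHh|i g IH|i g IH|i g IH|i g IH] //=;
  rewrite ?IH ?IHg ?IHh ?map_cat //.
- by rewrite filter_map; congr map; apply: eq_filter => j /=; rewrite inj_eq.
- by rewrite filter_map; congr map; apply: eq_filter => j /=; rewrite inj_eq.
Qed.

End Rename.

Lemma tvars_tnth V n (ts : n.-tuple (term V)) i m :
  m \in tvars (tnth ts i) -> m \in flatten (map (@tvars V) ts).
Proof.
move=> Hm; apply/flattenP; exists (tvars (tnth ts i)) => //.
by rewrite -tnth_map; exact: mem_tnth.
Qed.

Lemma in_catP (T : eqType) (A : Type) (l1 l2 : seq T) (f g : T -> A) :
  {in l1 ++ l2, f =1 g} -> {in l1, f =1 g} /\ {in l2, f =1 g}.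
Proof. by move=> H; split=> x Hx; apply: H; rewrite mem_cat Hx ?orbT. Qed.

Lemma tval_agree V T (M : interp V T) e1 e2 t :
  {in tvars t, e1 =1 e2} -> tval M e1 t = tval M e2 t.
Proof. by case: t => [i|c] //= H; apply: H; rewrite inE. Qed.

Lemma sat_agree V T (M : interp V T) (f : formula V) e1 e2 s1 s2 :
  {in fv f, e1 =1 e2} -> {in fsv f, s1 =1 s2} ->
  (sat M e1 s1 f <-> sat M e2 s2 f).
Proof.
elim: f e1 e2 s1 s2 => [|t u|r ts|i t|g IH|g IHg h IHh|g IHg h IHh|i g IH|i g IH|i g IH|i g IH]
  e1 e2 s1 s2 He Hs /=.
- by [].
- case/in_catP: He => He1 He2.
  by rewrite (@tval_agree _ _ _ e1 e2 t) // (@tval_agree _ _ _ e1 e2 u).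
- have E j : tval M e1 (tnth ts j) = tval M e2 (tnth ts j).
    by apply: tval_agree => m Hm; apply: He; apply: tvars_tnth Hm.
  by split=> -[xs [Hxs Hr]]; exists xs; split=> // j; [rewrite -E | rewrite E].
- by rewrite (@tval_agree _ _ _ e1 e2) // Hs ?inE.
- by rewrite (IH e1 e2 s1 s2).
- case/in_catP: He => He1 He2; case/in_catP: Hs => Hs1 Hs2.
  by rewrite (IHg e1 e2 s1 s2) // (IHh e1 e2 s1 s2).
- case/in_catP: He => He1 He2; case/in_catP: Hs => Hs1 Hs2.
  by rewrite (IHg e1 e2 s1 s2) // (IHh e1 e2 s1 s2).
- have H x : sat M (fun j => if j == i then Some x else e1 j) s1 g <->
             sat M (fun j => if j == i then Some x else e2 j) s2 g.
    by apply: IH => // m Hm; case: eqP => // /eqP ne; rewrite He // mem_filter ne.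
  by split=> -[x /H Hx]; exists x.
- have H x : sat M (fun j => if j == i then Some x else e1 j) s1 g <->
             sat M (fun j => if j == i then Some x else e2 j) s2 g.
    by apply: IH => // m Hm; case: eqP => // /eqP ne; rewrite He // mem_filter ne.
  by split=> Hx x; apply/H.
- have H X : sat M e1 (fun j => if j == i then X else s1 j) g <->
             sat M e2 (fun j => if j == i then X else s2 j) g.
    by apply: IH => // m Hm; case: eqP => // /eqP ne; rewrite Hs // mem_filter ne.
  by split=> -[X /H HX]; exists X.
- have H X : sat M e1 (fun j => if j == i then X else s1 j) g <->
             sat M e2 (fun j => if j == i then X else s2 j) g.
    by apply: IH => // m Hm; case: eqP => // /eqP ne; rewrite Hs // mem_filter ne.
  by split=> HX X; apply/H.
Qed.

Definition equiv_formula V (f g : formula V) :=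
  forall (T : finType) (M : interp V T) e s, sat M e s f <-> sat M e s g.

Lemma rename_equiv V (p q : nat -> nat) (f : formula V) :
  injective p -> injective q -> {in fv f, p =1 id} -> {in fsv f, q =1 id} ->
  equiv_formula (rename p q f) f.
Proof.
move=> inj_p inj_q Hp Hq T M e s; rewrite sat_rename //.
by apply: sat_agree => m Hm /=; rewrite ?Hp ?Hq.
Qed.

Definition swap (i j m : nat) := if m == i then j else if m == j then i else m.

Lemma swap_l i j : swap i j i = j.
Proof. by rewrite /swap eqxx. Qed.

Lemma swap_id i j m : m != i -> m != j -> swap i j m = m.
Proof. by rewrite /swap => /negPf -> /negPf ->. Qed.

Lemma swapK i j : involutive (swap i j).
Proof.
rewrite /swap => m; have [->|ni] := eqVneq m i.
  by rewrite eqxx; case: eqP => [->|]; rewrite ?eqxx.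
have [->|nj] := eqVneq m j; first by rewrite eqxx.
by rewrite (negPf ni) (negPf nj).
Qed.

Lemma swap_inj i j : injective (swap i j).
Proof. exact: can_inj (swapK i j). Qed.

Definition fresh (X : seq nat) := (\max_(i <- X) i).+1.

Lemma ltn_fresh X i : i \in X -> i < fresh X.
Proof. by move=> Hi; rewrite ltnS; exact: leq_bigmax_seq. Qed.

Lemma fresh_notin X : fresh X \notin X.
Proof. by apply/negP => /ltn_fresh; rewrite ltnn. Qed.

Definition in_fragment (L : logic) (k : nat) (X Y : seq nat) V (f : formula V) :=
  [&& in_logic L f, qr f <= k, all (fun m => m \in X) (fv f)
    & all (fun m => m \in Y) (fsv f)].

Section Fragment.
Variables (L : logic) (k : nat) (X Y : seq nat) (V : vocab).
Notation in_frag := (in_fragment L k X Y).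

Lemma in_fragment_false : in_frag (@Ffalse V).
Proof. by case: L. Qed.

Lemma in_fragment_neg (g : formula V) : in_frag (Fneg g) = in_frag g.
Proof. by case: L. Qed.

Lemma in_fragment_and (g h : formula V) :
  in_frag (Fand g h) = in_frag g && in_frag h.
Proof.
rewrite /in_fragment /= geq_max !all_cat; case: L => /=;
  by rewrite -!andbA; do !bool_congr.
Qed.

Lemma in_fragment_or (g h : formula V) :
  in_frag (For g h) = in_frag g && in_frag h.
Proof. by rewrite -in_fragment_and; case: L. Qed.

Lemma in_fragment_all i (g : formula V) :
  in_frag (Fall i g) = in_frag (Fex i (Fneg g)).
Proof. by case: L. Qed.

Lemma in_fragment_allS i (g : formula V) :
  in_frag (FallS i g) = in_frag (FexS i (Fneg g)).
Proof. by case: L. Qed.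

End Fragment.

Fixpoint big_or V (l : seq (formula V)) : formula V :=
  if l is f :: l then For f (big_or l) else Ffalse.

Fixpoint big_and V (l : seq (formula V)) : formula V :=
  if l is f :: l then Fand f (big_and l) else Fneg Ffalse.

Section TruthVectors.
Variables (V : vocab) (I : finType) (B : I -> formula V).

Definition truth_vector T (M : interp V T) e s : {ffun I -> bool} :=
  [ffun i => `[< sat M e s (B i) >]].

Definition literal (f : formula V) (b : bool) := if b then f else Fneg f.

Definition char_formula (v : {ffun I -> bool}) :=
  big_and [seq literal (B i) (v i) | i <- enum I].

Definition dnf (P : {set {ffun I -> bool}}) :=
  big_or [seq char_formula v | v <- enum P].

Variables (T : finType) (M : interp V T) (e : nat -> option T) (s : nat -> {set T}).

Lemma sat_char_formula v :
  sat M e s (char_formula v) <-> truth_vector M e s = v.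
Proof.
have sat_literal i : sat M e s (literal (B i) (v i)) <-> truth_vector M e s i = v i.
  by rewrite /literal ffunE; case: (v i); case: asboolP.
rewrite -ffunP /char_formula; split.
- move=> H i; have : i \in enum I by rewrite mem_enum.
  elim: (enum I) H => //= j r IH [Hj Hr].
  by rewrite inE => /predU1P [->|]; [exact/sat_literal | exact: IH].
- move=> Hv; elim: (enum I) => //= j r IH; split=> //; exact/sat_literal.
Qed.

Lemma sat_dnf P : sat M e s (dnf P) <-> truth_vector M e s \in P.
Proof.
rewrite /dnf -mem_enum; elim: (enum P) => [|v r IH] /=; first by rewrite in_nil.
rewrite inE sat_char_formula IH.
by split=> [[->|->]|/orP[/eqP->|->]]; rewrite ?eqxx ?orbT; auto.
Qed.

Lemma in_fragment_dnf L k X Y P :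
  (forall i, in_fragment L k X Y (B i)) -> in_fragment L k X Y (dnf P).
Proof.
move=> HB; rewrite /dnf; elim: (enum P) => [|v r IH] /=; first exact: in_fragment_false.
rewrite in_fragment_or IH andbT /char_formula; elim: (enum I) => [|i l IHl] /=.
  by rewrite in_fragment_neg in_fragment_false.
by rewrite in_fragment_and IHl andbT /literal; case: (v i); rewrite ?in_fragment_neg HB.
Qed.

End TruthVectors.

Definition is_atomic V (f : formula V) :=
  match f with Feq _ _ | Frel _ _ | Fmem _ _ => true | _ => false end.

Definition is_exists V (f : formula V) :=
  match f with Fex _ _ | FexS _ _ => true | _ => false end.

Definition finite_fragment (L : logic) (k : nat) (X Y : seq nat) (V : vocab) :=
  exists (I : finType) (Phi : I -> formula V),
    (forall i, in_fragment L k X Y (Phi i)) /\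
    (forall f, in_fragment L k X Y f -> exists i, equiv_formula f (Phi i)).

Lemma equiv_all_not_ex V i (g : formula V) :
  equiv_formula (Fall i g) (Fneg (Fex i (Fneg g))).
Proof.
move=> T M e s /=; split=> [H [x]|H x]; first by apply; exact: H.
by apply: contrapT => Hx; apply: H; exists x.
Qed.

Lemma equiv_allS_not_exS V i (g : formula V) :
  equiv_formula (FallS i g) (Fneg (FexS i (Fneg g))).
Proof.
move=> T M e s /=; split=> [H [X]|H X]; first by apply; exact: H.
by apply: contrapT => HX; apply: H; exists X.
Qed.

Definition determined_by V (I : finType) (B : I -> formula V) (f : formula V) :=
  exists P : {set {ffun I -> bool}},
    forall T (M : interp V T) e s, sat M e s f <-> truth_vector B M e s \in P.

Section Determined.
Variables (L : logic) (k : nat) (X Y : seq nat) (V : vocab).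
Notation in_frag := (in_fragment L k X Y).

Lemma determined_by_truth_vector (I : finType) (B : I -> formula V) :
  (forall f, in_frag f -> is_atomic f || is_exists f ->
     exists i, equiv_formula f (B i)) ->
  forall f, in_frag f -> determined_by B f.
Proof.
move=> HB.
have basic f : in_frag f -> is_atomic f || is_exists f -> determined_by B f.
  move=> Hf Hb; have [i Hi] := HB f Hf Hb; exists [set v : {ffun I -> bool} | v i].
  by move=> T M e s; rewrite inE ffunE Hi; exact: rwP (asboolP _).
have dual f g : equiv_formula f (Fneg g) -> in_frag g -> is_atomic g || is_exists g ->
    determined_by B f.
  move=> Hfg Hg Hb; have [P HP] := basic g Hg Hb.
  by exists (~: P) => T M e s; rewrite in_setC Hfg /= HP; exact: rwP negP.
elim=> [|t u|r ts|i t|g IH|g IHg h IHh|g IHg h IHh|i g _|i g _|i g _|i g _] Hf;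
  try by apply: basic.
- by exists set0 => T M e s; rewrite in_set0.
- rewrite in_fragment_neg in Hf; have [P HP] := IH Hf.
  by exists (~: P) => T M e s; rewrite in_setC /= HP; exact: rwP negP.
- rewrite in_fragment_and in Hf; case/andP: Hf => /IHg [P HP] /IHh [Q HQ].
  by exists (P :&: Q) => T M e s; rewrite in_setI /= HP HQ; exact: rwP andP.
- rewrite in_fragment_or in Hf; case/andP: Hf => /IHg [P HP] /IHh [Q HQ].
  by exists (P :|: Q) => T M e s; rewrite in_setU /= HP HQ; exact: rwP orP.
- apply: (dual _ (Fex i (Fneg g))); rewrite -?in_fragment_all //.
  exact: equiv_all_not_ex.
- apply: (dual _ (FexS i (Fneg g))); rewrite -?in_fragment_allS //.
  exact: equiv_allS_not_exS.
Qed.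

End Determined.

Section Atoms.
Variables (V : vocab) (X Y : seq nat).

Definition term_index := ('I_(fresh X) + csym V)%type.

Definition term_of (t : term_index) : term V :=
  match t with inl i => tvar V i | inr c => tconst c end.

Definition index_of (t : term V) : term_index :=
  match t with tvar i => inl (inord i) | tconst c => inr c end.

Lemma index_ofK t : all (fun m => m \in X) (tvars t) -> term_of (index_of t) = t.
Proof. by case: t => //= i; rewrite andbT => /ltn_fresh Hi; rewrite inordK. Qed.

Definition atom_index :=
  (term_index * term_index + {r : rsym V & (arity r).-tuple term_index}
   + 'I_(fresh Y) * term_index)%type.

Definition atom_of (a : atom_index) : formula V :=
  match a with
  | inl (inl (t, u)) => Feq (term_of t) (term_of u)
  | inl (inr (existT r ts)) => Frel (map_tuple term_of ts)
  | inr (i, t) => Fmem i (term_of t)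
  end.

Lemma atom_ofP (f : formula V) : is_atomic f ->
  all (fun m => m \in X) (fv f) -> all (fun m => m \in Y) (fsv f) -> exists a, atom_of a = f.
Proof.
case: f => //= [t u _|r ts _|i t _] HX HY.
- rewrite all_cat in HX; case/andP: HX => Ht Hu.
  by exists (inl (inl (index_of t, index_of u))); rewrite /= !index_ofK.
- exists (inl (inr (existT _ r (map_tuple index_of ts)))).
  congr Frel; apply: eq_from_tnth => j; rewrite !tnth_map index_ofK //.
  by apply/allP => m Hm; apply: (allP HX); exact: tvars_tnth Hm.
- rewrite andbT in HY; exists (inr (inord i, index_of t)).
  by rewrite /= inordK ?ltn_fresh // index_ofK.
Qed.

End Atoms.

Lemma finite_fragment_of_exists L k X Y V (I : finType) (Q : I -> formula V) :
  (forall f, in_fragment L k X Y f -> is_exists f ->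
     exists i, in_fragment L k X Y (Q i) /\ equiv_formula f (Q i)) ->
  finite_fragment L k X Y V.
Proof.
move=> HQ.
pose B (j : atom_index V X Y + I) :=
  let g := match j with inl a => atom_of a | inr i => Q i end in
  if in_fragment L k X Y g then g else Ffalse.
have HB j : in_fragment L k X Y (B j).
  by rewrite /B; case: ifP => // _; exact: in_fragment_false.
have cover f : in_fragment L k X Y f -> is_atomic f || is_exists f ->
    exists j, equiv_formula f (B j).
  move=> Hf /orP [Hat|Hex].
  - have /and4P [_ _ HX HY] := Hf; have [a Ha] := atom_ofP Hat HX HY.
    by exists (inl a); rewrite /B /= Ha Hf.
  - have [i [Hi Hfi]] := HQ f Hf Hex.
    by exists (inr i); rewrite /B /= Hi.
exists {set {ffun atom_index V X Y + I -> bool}}, (dnf B); split.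
  by move=> P; exact: in_fragment_dnf.
move=> f /(determined_by_truth_vector cover) [P HP].
by exists P => T M e s; rewrite sat_dnf HP.
Qed.

Section FreshRenaming.
Variables (L : logic) (k : nat) (X Y : seq nat) (V : vocab) (i j : nat) (g : formula V).

Lemma swap_fresh m (Z : seq nat) :
  j \notin Z -> m \in Z -> m != i -> swap i j m = m.
Proof. by move=> Hj Hm ni; apply: swap_id ni _; apply: contraNneq Hj => <-. Qed.

Lemma in_fragment_rename_ex : j \notin X ->
  in_fragment L k.+1 X Y (Fex i g) -> in_fragment L k (j :: X) Y (rename (swap i j) id g).
Proof.
move=> Hj /and4P [Hl Hq HX HY]; apply/and4P; split.
- by case: L Hl => //=; rewrite is_FO_rename.
- by rewrite qr_rename.
- rewrite fv_rename; last exact: swap_inj.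
  apply/allP => _ /mapP [m Hm ->].
  have [->|ne] := eqVneq m i; first by rewrite swap_l; exact: mem_head.
  have HmX : m \in X by apply: (allP HX); rewrite /= mem_filter ne.
  by rewrite (swap_fresh Hj HmX ne) in_cons HmX orbT.
- by rewrite fsv_rename ?map_id.
Qed.

Lemma in_fragment_rename_exS : j \notin Y ->
  in_fragment L k.+1 X Y (FexS i g) -> in_fragment L k X (j :: Y) (rename id (swap i j) g).
Proof.
move=> Hj /and4P [Hl Hq HX HY]; apply/and4P; split.
- by case: L Hl.
- by rewrite qr_rename.
- by rewrite fv_rename ?map_id.
- rewrite fsv_rename; last exact: swap_inj.
  apply/allP => _ /mapP [m Hm ->].
  have [->|ne] := eqVneq m i; first by rewrite swap_l; exact: mem_head.
  have HmY : m \in Y by apply: (allP HY); rewrite /= mem_filter ne.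
  by rewrite (swap_fresh Hj HmY ne) in_cons HmY orbT.
Qed.

Lemma in_fragment_ex : in_fragment L k (i :: X) Y g -> in_fragment L k.+1 X Y (Fex i g).
Proof.
case/and4P => Hl Hq HX HY; apply/and4P; split=> //=.
apply/allP => m; rewrite /= mem_filter => /andP [ne /(allP HX)].
by rewrite /= in_cons (negPf ne).
Qed.

Lemma in_fragment_exS : L = MSO ->
  in_fragment L k X (i :: Y) g -> in_fragment L k.+1 X Y (FexS i g).
Proof.
move=> -> /and4P [_ Hq HX HY]; apply/and4P; split=> //=.
apply/allP => m; rewrite /= mem_filter => /andP [ne /(allP HY)].
by rewrite /= in_cons (negPf ne).
Qed.

Lemma equiv_ex_rename : j \notin X -> all (fun m => m \in X) (fv (Fex i g)) ->
  equiv_formula (Fex i g) (Fex j (rename (swap i j) id g)).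
Proof.
move=> Hj HX T M e s.
have Hfix : {in fv (Fex i g), swap i j =1 id}.
  move=> m Hm; have HmX := allP HX m Hm.
  by move: Hm; rewrite /= mem_filter => /andP [ne _]; exact: swap_fresh Hj HmX ne.
have := rename_equiv (@swap_inj i j) (@inj_id nat) Hfix (fun _ _ => erefl) M e s.
by rewrite /= swap_l => H; exact: iff_sym H.
Qed.

Lemma equiv_exS_rename : j \notin Y -> all (fun m => m \in Y) (fsv (FexS i g)) ->
  equiv_formula (FexS i g) (FexS j (rename id (swap i j) g)).
Proof.
move=> Hj HY T M e s.
have Hfix : {in fsv (FexS i g), swap i j =1 id}.
  move=> m Hm; have HmY := allP HY m Hm.
  by move: Hm; rewrite /= mem_filter => /andP [ne _]; exact: swap_fresh Hj HmY ne.
have := rename_equiv (@inj_id nat) (@swap_inj i j) (fun _ _ => erefl) Hfix M e s.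
by rewrite /= swap_l => H; exact: iff_sym H.
Qed.

End FreshRenaming.

Lemma fragment_finite L V k : forall X Y, finite_fragment L k X Y V.
Proof.
elim: k => [|k IH] X Y.
  apply: (@finite_fragment_of_exists _ _ _ _ _ void (fun _ => Ffalse)).
  by case=> // i g /and4P [].
have [I1 [P1 [G1 C1]]] := IH (fresh X :: X) Y.
have [I2 [P2 [G2 C2]]] := IH X (fresh Y :: Y).
apply: (@finite_fragment_of_exists _ _ _ _ _ (I1 + I2)%type
  (fun q => match q with inl i => Fex (fresh X) (P1 i)
                       | inr i => FexS (fresh Y) (P2 i) end)).
case=> // i g Hf _.
- have [i1 Hi1] := C1 _ (in_fragment_rename_ex (fresh_notin X) Hf).
  exists (inl i1); split; first exact: in_fragment_ex.
  have /and4P [_ _ HX _] := Hf; move=> T M e s.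
  apply: iff_trans (equiv_ex_rename (fresh_notin X) HX M e s) _.
  by split=> -[x /Hi1 Hx]; exists x.
- have [i2 Hi2] := C2 _ (in_fragment_rename_exS (fresh_notin Y) Hf).
  have HL : L = MSO by move: Hf; rewrite /in_fragment; case: (L).
  exists (inr i2); split; first exact: in_fragment_exS.
  have /and4P [_ _ _ HY] := Hf; move=> T M e s.
  apply: iff_trans (equiv_exS_rename (fresh_notin Y) HY M e s) _.
  by split=> -[X' /Hi2 HX']; exists X'.
Qed.

Section Types.
Variables (L : logic) (k : nat) (V : vocab).

Lemma in_fragment_sentence (f : formula V) :
  in_fragment L k [::] [::] f <-> L_sentence L f /\ qr f <= k.
Proof.
have nilE (l : seq nat) : all (fun m => m \in [::]) l = (l == [::]) by case: l.
rewrite /in_fragment /L_sentence /is_sentence !nilE.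
by split=> [/and4P [? ? /eqP ? /eqP ?] | [[? [-> ->]] ?]]; last apply/and4P.
Qed.

Lemma in_tp_neg T (N : interp V T) (f : formula V) :
  L_sentence L f -> qr f <= k -> ~ holds N f -> in_tp L k N (Fneg f).
Proof. by case: L => -[Hl [Hfv Hfsv]] Hq HN; do !split. Qed.

Lemma same_tp_of_sat_tp T1 T2 (N : interp V T1) (M : interp V T2) :
  sat_tp L k N M -> same_tp L k N M.
Proof.
move=> H f; split=> [Hf|[Ls [Hq HM]]].
  by have [Ls [Hq _]] := Hf; do !split => //; exact: H.
by do !split => //; apply: contrapT => HN; exact: H _ (in_tp_neg Ls Hq HN) HM.
Qed.

Variables (I : finType) (Phi : I -> formula V).
Hypotheses (HPhi : forall i, in_fragment L k [::] [::] (Phi i))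
  (Phi_cover : forall f, in_fragment L k [::] [::] f -> exists i, equiv_formula f (Phi i)).

Lemma sat_tp_truth_vector T1 T2 (N : interp V T1) (M : interp V T2) :
  truth_vector Phi N (fun _ => None) (fun _ => set0) =
    truth_vector Phi M (fun _ => None) (fun _ => set0) <-> sat_tp L k N M.
Proof.
split=> [Hv f [Ls [Hq HN]]|H].
  have [i Hi] := Phi_cover (proj2 (in_fragment_sentence f) (conj Ls Hq)).
  move/ffunP/(_ i): Hv; rewrite !ffunE => Hv.
  by rewrite /holds Hi; apply/asboolP; rewrite -Hv; apply/asboolP; apply/Hi.
apply/ffunP => i; rewrite !ffunE.
have [Ls Hq] := proj1 (in_fragment_sentence (Phi i)) (HPhi i).
case: asboolP => HN; case: asboolP => HM //; first by case: HM; apply: H.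
by case: (H _ (in_tp_neg Ls Hq HN)).
Qed.

End Types.

Section Flips.
Variables (s s' : vocab) (D : sclass s) (C : sclass s') (L : logic) (k : nat).

Lemma ksim_same_fst T (A : interp s T) (B1 B2 : interp s' T) :
  D A -> C B1 -> C B2 -> ksim D C L k (SPair A B1) (SPair A B2).
Proof. by do 4!split => //; left. Qed.

Lemma in_tpinv_same_tp T1 (A1 : interp s T1) (B1 : interp s' T1)
    T2 (A2 : interp s T2) (B2 : interp s' T2) f :
  C B1 -> D A2 -> C B2 -> same_tp L k (pairI A1 B1) (pairI A2 B2) ->
  in_tpinv D C L k A1 f -> in_tpinv D C L k A2 f.
Proof.
move=> CB1 DA2 CB2 Hs [Ls [Hq [Hinv [DA1 [B0 [CB0 H0]]]]]].
do 4!split => //; exists B2; split => //.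
have Hp : in_tp L k (pairI A1 B1) f by do !split => //; apply/(Hinv _ _ DA1 B0 B1).
by case: (Hs f) => /(_ Hp) [_ [_ ?]].
Qed.

Lemma same_tpinv_ksim p q :
  ksim D C L k p q -> same_tpinv D C L k (pfst p) (pfst q).
Proof.
case=> Dp [Cp [Dq [Cq [Heq|Hs]]]] f.
  change (in_tpinv D C L k (projT2 (existT _ (pdom p) (pfst p))) f <->
          in_tpinv D C L k (pfst q) f).
  by rewrite Heq.
split; first exact: in_tpinv_same_tp Cp Dq Cq Hs.
by apply: in_tpinv_same_tp Cq Dp Cp _ => g; apply: iff_sym.
Qed.

Lemma same_tpinv_kflip p q :
  kflip_of D C L k p q -> same_tpinv D C L k (pfst p) (pfst q).
Proof.
elim=> [|q' r _ IH /same_tpinv_ksim Hqr] f //.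
exact: iff_trans (IH f) (Hqr f).
Qed.

Variables (T : finType) (A : interp s T) (B : interp s' T).

Lemma exists_flip_disj : exists psi, flip_disj D C L k A B psi.
Proof.
have [I [Phi [HPhi Phi_cover]]] := fragment_finite L (vsum s s') k [::] [::].
pose tv T' (M : interp (vsum s s') T') :=
  truth_vector Phi M (fun _ => None) (fun _ => set0).
pose P := [set v : {ffun I -> bool} | `[< exists T' (A' : interp s T') (B' : interp s' T'),
  D A' /\ C B' /\ kflip D C L k A B A' B' /\ tv _ (pairI A' B') = v >]].
exists (dnf Phi P).
have [Ls Hq] := proj1 (in_fragment_sentence _ _ _) (in_fragment_dnf P HPhi).
split=> //; split=> // T'' M; rewrite /holds sat_dnf inE; split.
- case/asboolP=> T' [A' [B' [DA' [CB' [Hk Hv]]]]]; exists T', A', B'.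
  by do !split => //; apply/(sat_tp_truth_vector HPhi Phi_cover).
- case=> T' [A' [B' [DA' [CB' [Hk Hsat]]]]]; apply/asboolP; exists T', A', B'.
  by do !split => //; apply/(sat_tp_truth_vector HPhi Phi_cover).
Qed.

Variable psi : formula (vsum s s').
Hypothesis Hpsi : flip_disj D C L k A B psi.

Lemma flip_disj_holds T' (A' : interp s T') (B' : interp s' T') :
  D A' -> C B' -> holds (pairI A' B') psi <-> kflip D C L k A B A' B'.
Proof.
have [_ [_ psiE]] := Hpsi; move=> DA' CB'; rewrite psiE; split.
  case=> T2 [A2 [B2 [DA2 [CB2 [Hk Hsat]]]]]; apply: kflip_step Hk _.
  by do 4!split => //; right; apply: same_tp_of_sat_tp.
by move=> Hk; exists T', A', B'; do !split => //; move=> f [_ [_ ?]].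
Qed.

Lemma flip_disj_invariant : C_invariant D C psi.
Proof.
move=> T0 A0 DA0 B1 B2 CB1 CB2; rewrite !flip_disj_holds //.
by split=> Hk; apply: kflip_step Hk _; apply: ksim_same_fst.
Qed.

Hypotheses (HA : D A) (HB : C B).

Lemma flip_disj_same_tpinv T' (A' : interp s T') :
  D A' -> same_tpinv D C L k A A' <-> inQ D C psi A'.
Proof.
move=> DA'; split=> [Hs|[_ [B' [CB' Hh]]]].
  have [Ls [Hq _]] := Hpsi.
  have Hin : in_tpinv D C L k A psi.
    do 3!split => //; first exact: flip_disj_invariant.
    by split=> //; exists B; split=> //; apply/flip_disj_holds => //; exact: kflip_refl.
  by case: (Hs psi) => /(_ Hin) [_ [_ [_ ?]]].
exact: same_tpinv_kflip (proj1 (flip_disj_holds DA' CB') Hh).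
Qed.

End Flips.

Theorem proposition3p2 (L : logic) (k : nat) (s s' : vocab)
  (C : sclass s') (D : sclass s)
  (T : finType) (A : interp s T) (B : interp s' T) (HA : D T A) (HB : C T B) :
  (exists psi, flip_disj D C L k A B psi) /\
  forall psi : formula (vsum s s'), flip_disj D C L k A B psi ->
    (* (1) *)
    (forall (T' : finType) (A' : interp s T') (B' : interp s' T'),
        D T' A' -> C T' B' ->
        (holds (pairI A' B') psi <-> kflip D C L k A B A' B')) /\
    (* (2) *)
    (L_sentence L psi /\ qr psi <= k /\ C_invariant D C psi) /\
    (* (3) *)
    (forall (T' : finType) (A' : interp s T'), D T' A' ->
        (same_tpinv D C L k A A' <-> inQ D C psi A')).
Proof.
split; first exact: exists_flip_disj.
move=> psi Hpsi; have [Ls [Hq _]] := Hpsi.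
split; first exact: flip_disj_holds Hpsi.
split; first by split=> //; split=> //; exact: flip_disj_invariant Hpsi.
exact: flip_disj_same_tpinv Hpsi HA HB.
Qed.
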